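(* Let $K\subset S^3$ be a knot and $r=\frac{p}{q}$ (coprime integers). If the $r$-surgery on $K$ is $SU(2)$-cyclic, then $R^{*}_{K}\cap S(r)=\emptyset$. If the $r$-surgery on $K$ is $SO(3)$-cyclic, then $R^{*}_{K}\cap \widehat{S}(r)=\emptyset$.
   Context: Let $m,l$ be the meridian and longitude of $K$ in $\pi_1(S^3-N(K))$. Define $R_{K}\subset(\mathbb{R}/2\pi\mathbb{Z})\oplus(\mathbb{R}/2\pi\mathbb{Z})$ as the set of $(\theta,\eta)$ for which there exists a homomorphism $\rho:\pi_{1}(S^{3}-N(K))\to SU(2)$ with $\rho(m)=\mathrm{diag}(e^{i\theta},e^{-i\theta})$ and $\rho(l)=\mathrm{diag}(e^{i\eta},e^{-i\eta})$. Let $R^{*}_{K}=R_K\cap\{\eta\notin 2\pi\mathbb{Z}\}$. Set $S(r)=\{(\theta,\eta): p\theta+q\eta\in 2\pi\mathbb{Z}\ \text{or}\ p\theta+p\pi+q\eta\in 2\pi\mathbb{Z}\}$ and $\widehat S(r)=\{(\theta,\eta): p\theta+q\eta\in\pi\mathbb{Z}\}$. For $r\in\mathbb{Q}$, $K(r)$ denotes $r$-Dehn surgery on $K$; a closed orientable $3$-manifold is $SU(2)$-cyclic (resp. $SO(3)$-cyclic) if there is no homomorphism from its fundamental group to $SU(2)$ (resp. $SO(3)$) with non-cyclic image, and the $r$-surgery is so if $K(r)$ is. *)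

From HB Require Import structures.
From mathcomp Require Import all_boot all_order all_algebra.
From mathcomp Require Import monoid.
From mathcomp Require Import reals trigo.
From mathcomp Require Import complex.

Set Implicit Arguments.
Unset Strict Implicit.
Unset Printing Implicit Defensive.

Import GRing.Theory Num.Theory.

Definition gexpz (G : groupType) (x : G) (n : int) : G :=
  match n with
  | Posz k => natexp x k
  | Negz k => inv (natexp x k.+1)
  end.

Definition in_commutator_subgroup (G : groupType) (x : G) : Prop :=
  exists s : seq (G * G),
    x = foldr (fun pr acc => mul (commg pr.1 pr.2) acc) one s.

Definition normally_generated_by (G : groupType) (m : G) : Prop :=
  forall g : G, exists s : seq (G * bool),
    g = foldr (fun pr acc => mul (conjg (if pr.2 then m else inv m) pr.1) acc)
              one s.

(* The data of a knot K in S^3 that the statement uses: the knot group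
   G = pi_1(S^3 - N(K)) with its meridian m and (preferred) longitude l,
   together with the standard properties of knot groups:
   - m and l commute (peripheral subgroup Z^2),
   - l lies in the commutator subgroup (preferred longitude is null-homologous),
   - G is normally generated by m,
   - there is a homomorphism G -> Z sending m to 1 (so H_1 = Z generated by m). *)
Record knot_group := KnotGroup {
  kg_group : groupType;
  mer : kg_group;
  lon : kg_group;
  kg_commute : mul mer lon = mul lon mer;
  kg_lon_comm : in_commutator_subgroup lon;
  kg_normgen : normally_generated_by mer;
  kg_abel : exists d : kg_group -> int,
      (forall x y, d (mul x y) = (d x + d y)%R) /\ d mer = 1%R
}.

Local Open Scope ring_scope.

Section Matrices.
Variable R : realType.

Definition adjmx (A : 'M[R[i]]_2) : 'M[R[i]]_2 :=
  (map_mx (fun z => z^*) A)^T.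

Definition in_SU2 (A : 'M[R[i]]_2) : Prop :=
  A *m adjmx A = 1%:M /\ \det A = 1.

Definition in_SO3 (A : 'M[R]_3) : Prop :=
  A *m A^T = 1%:M /\ \det A = 1.

Definition expi (t : R) : R[i] := (cos t +i* sin t)%C.

Definition diag2 (a b : R[i]) : 'M[R[i]]_2 :=
  \matrix_(i < 2, j < 2) (if i == j then (if i == 0 :> nat then a else b) else 0).

Definition SU2_rep (G : groupType) (rho : G -> 'M[R[i]]_2) : Prop :=
  (forall x y, rho (mul x y) = rho x *m rho y) /\ (forall x, in_SU2 (rho x)).

Definition SO3_rep (G : groupType) (rho : G -> 'M[R]_3) : Prop :=
  (forall x y, rho (mul x y) = rho x *m rho y) /\ (forall x, in_SO3 (rho x)).

Definition cyclic_image_SU2 (G : groupType) (rho : G -> 'M[R[i]]_2) : Prop :=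
  exists g : 'M[R[i]]_2, forall x, exists n : int, rho x = g ^ n.

Definition cyclic_image_SO3 (G : groupType) (rho : G -> 'M[R]_3) : Prop :=
  exists g : 'M[R]_3, forall x, exists n : int, rho x = g ^ n.

(* Dehn surgery.  pi_1(K(p/q)) = pi_1(S^3 - N(K)) / << m^p l^q >>, so a
   homomorphism pi_1(K(p/q)) -> H is the same as a homomorphism
   rho : pi_1(S^3 - N(K)) -> H with rho(m^p l^q) = 1, with the same image. *)
Definition surgery_slope (K : knot_group) (p q : int) : kg_group K :=
  mul (gexpz (mer K) p) (gexpz (lon K) q).

Definition SU2_cyclic_surgery (K : knot_group) (p q : int) : Prop :=
  forall rho : kg_group K -> 'M[R[i]]_2,
    SU2_rep rho -> rho (surgery_slope K p q) = 1%:M -> cyclic_image_SU2 rho.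

Definition SO3_cyclic_surgery (K : knot_group) (p q : int) : Prop :=
  forall rho : kg_group K -> 'M[R]_3,
    SO3_rep rho -> rho (surgery_slope K p q) = 1%:M -> cyclic_image_SO3 rho.

(* R_K, R_K^*, S(r), \hat S(r); points of (R/2piZ)^2 are represented by
   real pairs (theta, eta); all these conditions are 2pi-periodic.     *)
Definition in_RK (K : knot_group) (theta eta : R) : Prop :=
  exists rho : kg_group K -> 'M[R[i]]_2,
    SU2_rep rho /\
    rho (mer K) = diag2 (expi theta) (expi (- theta)) /\
    rho (lon K) = diag2 (expi eta) (expi (- eta)).

Definition in_RK_star (K : knot_group) (theta eta : R) : Prop :=
  in_RK K theta eta /\ ~ (exists k : int, eta = 2 * pi * k%:~R).

Definition in_S (p q : int) (theta eta : R) : Prop :=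
  (exists k : int, p%:~R * theta + q%:~R * eta = 2 * pi * k%:~R) \/
  (exists k : int, p%:~R * theta + p%:~R * pi + q%:~R * eta = 2 * pi * k%:~R).

Definition in_S_hat (p q : int) (theta eta : R) : Prop :=
  exists k : int, p%:~R * theta + q%:~R * eta = pi * k%:~R.

End Matrices.

From HB Require Import structures.
From mathcomp Require Import all_boot all_order all_algebra.
From mathcomp Require Import monoid.
From mathcomp Require Import reals trigo.
From mathcomp Require Import complex.
From mathcomp Require Import ring lra zify.

(* Let rho realize (theta, eta) in R_K with eta not in 2 pi Z.  The longitude
   lies in [G, G] while rho(l) = diag(e^(i eta), e^(-i eta)) <> 1, so the image
   of rho is not abelian.  If p theta + q eta is in 2 pi Z, rho kills m^p l^q
   and thus is a non-cyclic representation of pi_1(K(p/q)).  Twisting rho by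
   the sign character x |-> (-1)^(lk(x, K)) moves (theta, eta) to
   (theta + pi, eta), which reduces the second half of S(r) to the first.
   If p theta + q eta is only in pi Z, then rho(m^p l^q) = +-1 is killed by
   the adjoint representation ad : SU(2) -> SO(3).  When ad o rho has cyclic
   image, ad rho(x) and ad rho(y) commute, hence rho(x) rho(y) = +-rho(y) rho(x);
   the minus sign would make ad rho(x), ad rho(y) and their product
   ad rho(xy) three involutions of a cyclic group, which has only one. *)

Set Implicit Arguments.
Unset Strict Implicit.
Unset Printing Implicit Defensive.

Import Order.TTheory GRing.Theory Num.Theory.
Local Open Scope ring_scope.

Lemma ord2P (i : 'I_2) : i = 0 \/ i = 1.
Proof. by case: i => [[|[|i]] Hi]; [left; apply: val_inj | right; apply: val_inj |]. Qed.

Section ExplicitMatrices.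
Variable T : comNzRingType.

Lemma det_mx22 (A : 'M[T]_2) : \det A = A 0 0 * A 1 1 - A 0 1 * A 1 0.
Proof.
rewrite (expand_det_row _ 0) !big_ord_recl big_ord0 /cofactor !det_mx11 !mxE /=.
rewrite !expr0 !expr1 mul1r mulN1r addr0 mulrN.
by congr (_ * _ - _ * _); congr (A _ _); apply: val_inj.
Qed.

Definition mx3_entry (a b c d e f g h k : T) (i j : nat) : T :=
  match i, j with
  | 0, 0 => a | 0, 1 => b | 0, _ => c
  | 1, 0 => d | 1, 1 => e | 1, _ => f
  | _, 0 => g | _, 1 => h | _, _ => k
  end.

Definition mx3 a b c d e f g h k : 'M[T]_3 :=
  \matrix_(i < 3, j < 3) mx3_entry a b c d e f g h k i j.

Lemma det_mx3 a b c d e f g h k : \det (mx3 a b c d e f g h k) =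
  a * (e * k - f * h) - b * (d * k - f * g) + c * (d * h - e * g).
Proof.
rewrite (expand_det_row _ 0) !big_ord_recl big_ord0 /cofactor !det_mx22 !mxE /=.
by rewrite !expr0 !expr1 /=; ring.
Qed.

Lemma mulmx3 a b c d e f g h k a' b' c' d' e' f' g' h' k' :
  mx3 a b c d e f g h k *m mx3 a' b' c' d' e' f' g' h' k' =
  mx3 (a*a' + b*d' + c*g') (a*b' + b*e' + c*h') (a*c' + b*f' + c*k')
      (d*a' + e*d' + f*g') (d*b' + e*e' + f*h') (d*c' + e*f' + f*k')
      (g*a' + h*d' + k*g') (g*b' + h*e' + k*h') (g*c' + h*f' + k*k').
Proof.
apply/matrixP => i j; rewrite !mxE !big_ord_recl big_ord0 !mxE /=.
by case: i => [[|[|[|i]]] Hi] //; case: j => [[|[|[|j]]] Hj] //=; ring.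
Qed.

Lemma trmx3 a b c d e f g h k :
  (mx3 a b c d e f g h k)^T = mx3 a d g b e h c f k.
Proof.
apply/matrixP => i j; rewrite !mxE.
by case: i => [[|[|[|i]]] Hi] //; case: j => [[|[|[|j]]] Hj].
Qed.

Lemma mx3_1 : 1%:M = mx3 1 0 0 0 1 0 0 0 1.
Proof.
apply/matrixP => i j; rewrite !mxE.
by case: i => [[|[|[|i]]] Hi] //; case: j => [[|[|[|j]]] Hj].
Qed.

Lemma mx3_inj a b c d e f g h k a' b' c' d' e' f' g' h' k' :
  mx3 a b c d e f g h k = mx3 a' b' c' d' e' f' g' h' k' ->
  [/\ [/\ a = a', b = b' & c = c'], [/\ d = d', e = e' & f = f']
    & [/\ g = g', h = h' & k = k']].
Proof.
move/matrixP => E.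
have := E 0 0; have := E 0 1; have := E 0 2%:R; have := E 1 0; have := E 1 1;
have := E 1 2%:R; have := E 2%:R 0; have := E 2%:R 1; have := E 2%:R 2%:R.
by rewrite !mxE /= => *.
Qed.

End ExplicitMatrices.

Record quat (R : Type) := Quat { qre : R; qi : R; qj : R; qk : R }.

Section Quaternions.
Variable R : realFieldType.
Implicit Types p q : quat R.

Lemma sumr4_sqr_eq0 (a b c d : R) : a ^+ 2 + b ^+ 2 + c ^+ 2 + d ^+ 2 = 0 ->
  [/\ a = 0, b = 0, c = 0 & d = 0].
Proof. by move=> S; split; nra. Qed.

(* [qmul] is the product transported from [su2mat] below (unit quaternions
   are SU(2)), and [qrot p] is the matrix of the rotation [x |-> p x p^-1] of
   the pure quaternions, i.e. the adjoint representation SU(2) -> SO(3). *)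
Definition qmul p q : quat R :=
  Quat (qre p * qre q - qi p * qi q - qj p * qj q - qk p * qk q)
       (qre p * qi q + qi p * qre q - qj p * qk q + qk p * qj q)
       (qj p * qre q - qk p * qi q + qre p * qj q + qi p * qk q)
       (qj p * qi q + qk p * qre q + qre p * qk q - qi p * qj q).

Definition qopp p : quat R := Quat (- qre p) (- qi p) (- qj p) (- qk p).

Definition qnorm p : R := qre p ^+ 2 + qi p ^+ 2 + qj p ^+ 2 + qk p ^+ 2.

Definition qrot p : 'M[R]_3 :=
  let: Quat w x y z := p in
  mx3 (w^+2 - x^+2 - y^+2 + z^+2) (2*w*x - 2*y*z) (2*w*y + 2*x*z)
      (-2*w*x - 2*y*z) (w^+2 - x^+2 + y^+2 - z^+2) (2*w*z - 2*x*y)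
      (2*x*z - 2*w*y) (-2*w*z - 2*x*y) (w^+2 + x^+2 - y^+2 - z^+2).

Lemma qnormM p q : qnorm (qmul p q) = qnorm p * qnorm q.
Proof. by rewrite /qnorm /=; ring. Qed.

Lemma qrotM p q : qrot (qmul p q) = qrot p *m qrot q.
Proof.
case: p => w x y z; case: q => w' x' y' z'.
by rewrite /qrot mulmx3 /=; congr mx3; ring.
Qed.

Lemma qrot_orthogonal p : qnorm p = 1 -> qrot p *m (qrot p)^T = 1%:M.
Proof.
case: p => w x y z; rewrite /qnorm /= => N.
rewrite trmx3 mulmx3 mx3_1; congr mx3; try ring;
by rewrite -[RHS](expr1n _ 2) -[X in _ = X ^+ _]N; ring.
Qed.

Lemma det_qrot p : qnorm p = 1 -> \det (qrot p) = 1.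
Proof.
case: p => w x y z; rewrite /qnorm /= => N.
by rewrite det_mx3 -[RHS](expr1n _ 3) -[X in _ = X ^+ _]N; ring.
Qed.

Lemma qrot_inj p q : qnorm p = 1 -> qnorm q = 1 -> qrot p = qrot q ->
  p = q \/ p = qopp q.
Proof.
case: p => w x y z; case: q => w' x' y' z'; rewrite /qnorm /= => Np Nq.
move=> /mx3_inj[[e11 e12 e13] [e21 e22 e23] [e31 e32 e33]].
have Ew : w^+2 = w'^+2 by lra.
have Ex : x^+2 = x'^+2 by lra.
have Ey : y^+2 = y'^+2 by lra.
have Ez : z^+2 = z'^+2 by lra.
have Ewx : w * x = w' * x' by lra.
have Eyz : y * z = y' * z' by lra.
have Ewy : w * y = w' * y' by lra.
have Exz : x * z = x' * z' by lra.
have Ewz : w * z = w' * z' by lra.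
have Exy : x * y = x' * y' by lra.
(* all products p_a p_b equal q_a q_b, so <p, q> ^+ 2 = qnorm q ^+ 2 = 1 *)
have /eqP : (w*w' + x*x' + y*y' + z*z')^+2 = 1.
  transitivity (w^+2 * w'^+2 + x^+2 * x'^+2 + y^+2 * y'^+2 + z^+2 * z'^+2
     + 2 * ((w * x) * (w' * x') + (w * y) * (w' * y') + (w * z) * (w' * z')
          + (x * y) * (x' * y') + (x * z) * (x' * z') + (y * z) * (y' * z'))).
    by ring.
  rewrite Ew Ex Ey Ez Ewx Ewy Ewz Exy Exz Eyz -[RHS](expr1n _ 2).
  by rewrite -[X in _ = X ^+ _]Nq; ring.
rewrite sqrf_eq1 => /orP[] /eqP D; [left | right]; rewrite /qopp /=.
  have [] := @sumr4_sqr_eq0 (w - w') (x - x') (y - y') (z - z').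
    transitivity ((w^+2 + x^+2 + y^+2 + z^+2) + (w'^+2 + x'^+2 + y'^+2 + z'^+2)
      - 2 * (w*w' + x*x' + y*y' + z*z')); first by ring.
    by rewrite Np Nq D; ring.
  by move=> *; congr Quat; lra.
have [] := @sumr4_sqr_eq0 (w + w') (x + x') (y + y') (z + z').
  transitivity ((w^+2 + x^+2 + y^+2 + z^+2) + (w'^+2 + x'^+2 + y'^+2 + z'^+2)
    + 2 * (w*w' + x*x' + y*y' + z*z')); first by ring.
  by rewrite Np Nq D; ring.
by move=> *; congr Quat; lra.
Qed.

Definition qone : quat R := Quat 1 0 0 0.

Lemma qrot_pure_neq1 p : qnorm p = 1 -> qre p = 0 -> qrot p != 1%:M.
Proof.
move=> N re0; apply/eqP => E.
have Nqone : qnorm qone = 1 by rewrite /qnorm /=; ring.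
have Eqone : qrot qone = 1%:M by rewrite /qrot mx3_1; congr mx3; ring.
move: re0; have [->|->] /= := qrot_inj N Nqone (etrans E (esym Eqone)).
  by move/eqP; rewrite oner_eq0.
by move/eqP; rewrite oppr_eq0 oner_eq0.
Qed.

Lemma qrot_pure_involutive p : qnorm p = 1 -> qre p = 0 ->
  qrot p *m qrot p = 1%:M.
Proof.
case: p => w x y z; rewrite /qnorm /= => N w0; subst w.
rewrite mulmx3 mx3_1; congr mx3; try ring;
by rewrite -[RHS](expr1n _ 2) -[X in _ = X ^+ _]N; ring.
Qed.

Lemma qmul_anticomm p q : qnorm p = 1 -> qnorm q = 1 ->
  qmul p q = qopp (qmul q p) -> [/\ qre p = 0, qre q = 0 & qre (qmul p q) = 0].
Proof.
case: p => w x y z; case: q => w' x' y' z'; rewrite /qnorm /qmul /qopp /=.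
move=> Np Nq [E0 E1 E2 E3].
have F0 : w * w' - x * x' - y * y' - z * z' = 0 by lra.
have F1 : w * x' + x * w' = 0 by lra.
have F2 : w * y' + y * w' = 0 by lra.
have F3 : w * z' + z * w' = 0 by lra.
have w'0 : w' = 0.
  rewrite -[w']mulr1 -Np.
  transitivity (w * (w * w' - x * x' - y * y' - z * z') + x * (w * x' + x * w')
     + y * (w * y' + y * w') + z * (w * z' + z * w')); first by ring.
  by rewrite F0 F1 F2 F3; ring.
have w0 : w = 0.
  rewrite -[w]mulr1 -Nq.
  transitivity (w' * (w * w' - x * x' - y * y' - z * z') + x' * (w * x' + x * w')
     + y' * (w * y' + y * w') + z' * (w * z' + z * w')); first by ring.
  by rewrite F0 F1 F2 F3; ring.
by split => //; lra.
Qed.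

End Quaternions.

Section CyclicInvolutions.
Variable T : unitRingType.
Implicit Types (g h X Y : T) (a b n : int).

Lemma unitr_of_exprz g n : n != 0 -> g ^ n \is a GRing.unit -> g \is a GRing.unit.
Proof.
case: n => [[|n]|n] // _; first by rewrite unitrX_pos.
by rewrite unitrV unitrX_pos.
Qed.

Lemma exprz_involution h n : h * h = 1 -> h ^ n = 1 \/ h ^ n = h.
Proof.
move=> hh; have hu : h \is a GRing.unit by apply/unitrP; exists h.
rewrite (divz_eq n 2) exprzDr // mulrC -exprz_exp.
have -> : h ^ (2 : int) = 1 by rewrite -hh; exact: expr2.
rewrite exp1rz mul1r.
have [->|->] : (n %% 2)%Z = 0 \/ (n %% 2)%Z = 1 by lia.
  by left.
by right; rewrite expr1z.
Qed.

Lemma cyclic_involution_uniq g a b X Y : X = g ^ a -> Y = g ^ b ->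
  X * X = 1 -> Y * Y = 1 -> X != 1 -> Y != 1 -> X = Y.
Proof.
move=> EX EY XX YY X1 Y1.
have a0 : a != 0 by apply: contraNneq X1 => a0; rewrite EX a0 expr0z.
have gu : g \is a GRing.unit.
  by apply: (unitr_of_exprz a0); rewrite -EX; apply/unitrP; exists X.
have [s [t Est]] := Bezoutz a b.
set u := gcdz a b in Est.
(* with u = gcd a b, g ^ u is an involution and X, Y are powers of it *)
have uu : g ^ u * g ^ u = 1.
  rewrite -exprzDr // -Est.
  have -> : s * a + t * b + (s * a + t * b) = (a + a) * s + (b + b) * t by ring.
  by rewrite exprzDr // -!exprz_exp !exprzDr // -EX -EY XX YY !exp1rz mulr1.
have [X1'|->] : X = 1 \/ X = g ^ u.
  by rewrite EX -(divzK (dvdz_gcdl a b)) mulrC -exprz_exp; apply: exprz_involution.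
  by rewrite X1' eqxx in X1.
have [Y1'|->] // : Y = 1 \/ Y = g ^ u.
  by rewrite EY -(divzK (dvdz_gcdr a b)) mulrC -exprz_exp; apply: exprz_involution.
by rewrite Y1' eqxx in Y1.
Qed.

End CyclicInvolutions.

Lemma periodicz (U V : zmodType) (f : U -> V) (T : U) :
  periodic f T -> forall (k : int) (a : U), f (a + T *~ k) = f a.
Proof.
move=> fT [n|n] a; first exact: periodicn.
by rewrite NegzE mulrNz -(periodicn fT n.+1) subrK.
Qed.

Section Trigonometry.
Variable R : realType.
Implicit Types (t x : R) (k : int).

Lemma two_pi_intE k : 2 * pi * k%:~R = pi *+ 2 *~ k :> R.
Proof. by rewrite mulrzr mulr_natl. Qed.

Lemma cosD2piz k x : cos (x + 2 * pi * k%:~R) = cos x.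
Proof. by rewrite two_pi_intE (periodicz (@cosD2pi R)). Qed.

Lemma sinD2piz k x : sin (x + 2 * pi * k%:~R) = sin x.
Proof. by rewrite two_pi_intE (periodicz (@sinD2pi R)). Qed.

Lemma sin_pi_int k : sin (pi * k%:~R) = 0 :> R.
Proof.
have sin_pi_nat (n : nat) : sin (pi * n%:R) = 0 :> R.
  by rewrite mulr_natr -[_ *+ n]add0r (alternatingn (@sinDpi R)) sin0 mulr0.
by case: k => n; rewrite ?NegzE ?intrN ?mulrN ?sinN sin_pi_nat ?oppr0.
Qed.

Lemma cos_eq1 t : cos t = 1 -> exists k : int, t = 2 * pi * k%:~R.
Proof.
move=> ct1; have pi0 := pi_gt0 R.
have pi20 : 0 < 2 * pi :> R by rewrite mulr_gt0.
set k := Num.floor (t / (2 * pi)); exists k.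
have kt : k%:~R * (2 * pi) <= t.
  by have := floor_le (t / (2 * pi)); rewrite ler_pdivlMr.
have tk : t < (k + 1)%:~R * (2 * pi).
  by have := floorD1_gt (t / (2 * pi)); rewrite ltr_pdivrMr.
rewrite intrD /= in tk.
(* reduce to u := t - 2 pi k in [0, 2 pi), where cos u = 1 forces u = 0 *)
set u := t - 2 * pi * k%:~R.
have cu : cos u = 1 by rewrite /u -mulrN -intrN cosD2piz.
have u0 : 0 <= u by rewrite /u; lra.
have u2 : u < 2 * pi by rewrite /u; lra.
have [upi|piu] := lerP u pi.
  suff : u = 0 by rewrite /u => /eqP; rewrite subr_eq0 => /eqP.
  by apply: cos_inj; rewrite ?in_itv /= ?u0 ?upi ?pi_ge0 ?lexx // cu cos0.
suff : 2 * pi - u = 0 by lra.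
apply: cos_inj; rewrite ?in_itv /= ?pi_ge0 ?lexx //; first by apply/andP; split; lra.
by rewrite -cosN -(cosD2piz 1) mulr1 cos0 -cu; congr cos; ring.
Qed.

End Trigonometry.

Section SU2Quaternions.
Variable R : realType.
Implicit Types (p q : quat R) (A B : 'M[R[i]]_2).

Definition su2mat p : 'M[R[i]]_2 := \matrix_(i < 2, j < 2)
  match i : nat, j : nat with
  | 0, 0 => (qre p +i* qi p)%C
  | 0, _ => (- qj p +i* qk p)%C
  | _, 0 => (qj p +i* qk p)%C
  | _, _ => (qre p +i* - qi p)%C
  end.

Definition quat_of A : quat R :=
  Quat (complex.Re (A 0 0)) (complex.Im (A 0 0))
       (complex.Re (A 1 0)) (complex.Im (A 1 0)).

Lemma complexP (u v : R[i]) :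
  complex.Re u = complex.Re v -> complex.Im u = complex.Im v -> u = v.
Proof. by case: u => a b; case: v => c d /= -> ->. Qed.

Lemma su2matK : cancel su2mat quat_of.
Proof. by case=> w x y z; rewrite /quat_of !mxE. Qed.

Lemma su2matM p q : su2mat p *m su2mat q = su2mat (qmul p q).
Proof.
apply/matrixP => i j; rewrite !mxE !big_ord_recl big_ord0 !mxE /=.
case: p => w x y z; case: q => w' x' y' z'.
by case: i => [[|[|i]] Hi] //; case: j => [[|[|j]] Hj] //=; apply: complexP => /=; ring.
Qed.

Lemma SU2_entries A : in_SU2 A ->
  [/\ A 1 1 = (A 0 0)^*%C, A 0 1 = - (A 1 0)^*%C
    & (A 0 0)^*%C * A 0 0 + (A 1 0)^*%C * A 1 0 = 1].
Proof.
case=> /mulmx1C AA detA.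
have e00 : (adjmx A *m A) 0 0 = 1 by rewrite AA mxE.
have e01 : (adjmx A *m A) 0 1 = 0 by rewrite AA mxE.
rewrite !mxE !big_ord_recl big_ord0 !mxE addr0 in e00.
rewrite !mxE !big_ord_recl big_ord0 !mxE addr0 in e01.
have l10 : lift ord0 (ord0 : 'I_1) = 1 :> 'I_2 by apply: val_inj.
have o0 : ord0 = 0 :> 'I_2 by apply: val_inj.
rewrite l10 o0 /= in e00 e01; rewrite det_mx22 in detA.
split=> //.
  apply/eqP; rewrite -subr_eq0; apply/eqP.
  transitivity ((A 0 0)^* * (A 0 0 * A 1 1 - A 0 1 * A 1 0 - 1)
     - A 1 1 * ((A 0 0)^* * A 0 0 + (A 1 0)^* * A 1 0 - 1)
     + A 1 0 * ((A 0 0)^* * A 0 1 + (A 1 0)^* * A 1 1))%C; first by ring.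
  by rewrite detA e00 e01 !subrr; ring.
apply/eqP; rewrite -addr_eq0; apply/eqP.
transitivity (- A 0 1 * ((A 0 0)^* * A 0 0 + (A 1 0)^* * A 1 0 - 1)
   - (A 1 0)^* * (A 0 0 * A 1 1 - A 0 1 * A 1 0 - 1)
   + A 0 0 * ((A 0 0)^* * A 0 1 + (A 1 0)^* * A 1 1))%C; first by ring.
by rewrite detA e00 e01 !subrr; ring.
Qed.

Lemma su2matE A : in_SU2 A -> A = su2mat (quat_of A).
Proof.
case/SU2_entries => E11 E01 _; apply/matrixP => i j; rewrite !mxE.
have [->|->] := ord2P i; have [->|->] := ord2P j; rewrite /= ?E01 ?E11;
  by case: (A 0 0) (A 1 0) => [a b] [c d]; apply: complexP => /=; ring.
Qed.

Lemma qnorm_quat_of A : in_SU2 A -> qnorm (quat_of A) = 1.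
Proof.
case/SU2_entries => _ _; rewrite /qnorm /quat_of /=.
case: (A 0 0) => a b; case: (A 1 0) => c d /(congr1 (@complex.Re R)) /= <-.
by ring.
Qed.

Definition adm A : 'M[R]_3 := qrot (quat_of A).

Lemma admM A B : in_SU2 A -> in_SU2 B -> adm (A *m B) = adm A *m adm B.
Proof.
by move=> /su2matE EA /su2matE EB; rewrite /adm EA EB su2matM !su2matK qrotM.
Qed.

Lemma adm_SO3 A : in_SU2 A -> in_SO3 (adm A).
Proof.
move/qnorm_quat_of => N; split; [exact: qrot_orthogonal | exact: det_qrot].
Qed.

Lemma SU2_commute_of_adm_cyclic A B (g : 'M[R]_3) (a b : int) :
  in_SU2 A -> in_SU2 B -> adm A = g ^ a -> adm B = g ^ b -> A *m B = B *m A.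
Proof.
move=> HA HB EA EB.
have NA := qnorm_quat_of HA; have NB := qnorm_quat_of HB.
set p := quat_of A in NA; set q := quat_of B in NB.
have Npq : qnorm (qmul p q) = 1 by rewrite qnormM NA NB mulr1.
have Nqp : qnorm (qmul q p) = 1 by rewrite qnormM NA NB mulr1.
have : qrot (qmul p q) = qrot (qmul q p).
  rewrite !qrotM -/(adm A) -/(adm B) EA EB !mulmxE.
  by apply: commrXz; apply/commr_sym; apply: commrXz.
case/(qrot_inj Npq Nqp) => [E|/(qmul_anticomm NA NB)[p0 q0 pq0]].
  by rewrite (su2matE HA) (su2matE HB) !su2matM E.
have invA : adm A * adm A = 1 by rewrite -mulmxE; apply: qrot_pure_involutive.
have invB : adm B * adm B = 1 by rewrite -mulmxE; apply: qrot_pure_involutive.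
have AB := cyclic_involution_uniq EA EB invA invB
  (qrot_pure_neq1 NA p0) (qrot_pure_neq1 NB q0).
have := qrot_pure_neq1 Npq pq0.
by rewrite qrotM -/(adm A) -/(adm B) -AB mulmxE invA eqxx.
Qed.

End SU2Quaternions.

Section DiagonalSU2.
Variable R : realType.
Implicit Types (s t : R) (k : int).

Definition diag_expi t : 'M[R[i]]_2 := diag2 (expi t) (expi (- t)).

Lemma diag_expiE t : diag_expi t = su2mat (Quat (cos t) (sin t) 0 0).
Proof.
apply/matrixP => i j; rewrite !mxE.
case: i => [[|[|i]] Hi] //; case: j => [[|[|j]] Hj] //=;
  by apply: complexP; rewrite /= ?cosN ?sinN //; ring.
Qed.

Lemma diag_expiD s t : diag_expi s * diag_expi t = diag_expi (s + t).
Proof.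
rewrite !diag_expiE -mulmxE su2matM /qmul /= cosD sinD.
by congr su2mat; congr Quat; ring.
Qed.

Lemma diag_expi0 : diag_expi 0 = 1.
Proof.
rewrite diag_expiE cos0 sin0; apply/matrixP => i j; rewrite !mxE.
by case: i => [[|[|i]] Hi] //; case: j => [[|[|j]] Hj] //=; apply: complexP => /=; ring.
Qed.

Lemma diag_expiV t : (diag_expi t)^-1 = diag_expi (- t).
Proof.
have E : diag_expi t * diag_expi (- t) = 1 by rewrite diag_expiD subrr diag_expi0.
have E' : diag_expi (- t) * diag_expi t = 1 by rewrite diag_expiD addNr diag_expi0.
have u : diag_expi t \is a GRing.unit by apply/unitrP; exists (diag_expi (- t)).
by rewrite -[LHS]mulr1 -E mulrA mulVr ?mul1r.
Qed.

Lemma diag_expiXz t (n : int) : diag_expi t ^ n = diag_expi (n%:~R * t).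
Proof.
have expi_nat (m : nat) : diag_expi t ^+ m = diag_expi (m%:R * t).
  elim: m => [|m IH]; first by rewrite expr0 mul0r diag_expi0.
  by rewrite exprS IH diag_expiD -natr1; congr diag_expi; ring.
case: n => m; first exact: expi_nat.
by rewrite /exprz expi_nat diag_expiV NegzE intrN mulNr.
Qed.

Lemma diag_expiDpi t : diag_expi (t + pi) = - diag_expi t.
Proof.
rewrite !diag_expiE cosDpi sinDpi; apply/matrixP => i j; rewrite !mxE.
by case: i => [[|[|i]] Hi] //; case: j => [[|[|j]] Hj] //=; apply: complexP => /=; ring.
Qed.

Lemma diag_expi_2piz k : diag_expi (2 * pi * k%:~R) = 1.
Proof.
by rewrite diag_expiE -[2 * pi * _]add0r cosD2piz sinD2piz -diag_expiE diag_expi0.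
Qed.

Lemma diag_expi_eq1 t : diag_expi t = 1 -> exists k : int, t = 2 * pi * k%:~R.
Proof.
by move/matrixP => /(_ 0 0); rewrite !mxE /= => /(congr1 (@complex.Re R)); apply: cos_eq1.
Qed.

Lemma adm_diag_expi_piz k : adm (diag_expi (pi * k%:~R)) = 1%:M.
Proof.
have s0 := sin_pi_int R k; have c1 := @cos2Dsin2 R (pi * k%:~R).
rewrite s0 expr0n addr0 in c1.
rewrite /adm diag_expiE su2matK /qrot /= s0 mx3_1.
by congr mx3; try ring; rewrite -[RHS]c1; ring.
Qed.

End DiagonalSU2.

Section SU2Representations.
Variables (R : realType) (G : groupType).
Implicit Types (x y l : G) (A : 'M[R[i]]_2).

Lemma SU2_unit A : in_SU2 A -> A \is a GRing.unit.
Proof. by case=> AA _; apply/unitrP; exists (adjmx A); split=> //; apply: mulmx1C. Qed.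

Lemma SU2N A : in_SU2 A -> in_SU2 (- A).
Proof.
case=> AA detA; split; last by rewrite -scaleN1r detZ sqrrN expr1n mul1r.
have -> : adjmx (- A) = - adjmx A by apply/matrixP => i j; rewrite !mxE raddfN.
by rewrite mulmxN mulNmx opprK.
Qed.

Lemma hom_commutator_subgroup (d : G -> int) l :
  (forall x y, d (mul x y) = d x + d y) -> in_commutator_subgroup l -> d l = 0.
Proof.
move=> dM [s ->].
have d1 : d one = 0 by have := dM one one; rewrite mul1g; lia.
have dV x : d (inv x) + d x = 0 by rewrite -dM mulVg.
elim: s => [|[x y] s IH] //=.
by rewrite dM IH addr0 /commg /conjg !dM; have := dV x; have := dV y; lia.
Qed.

Variable rho : G -> 'M[R[i]]_2.
Hypothesis rhoSU2 : SU2_rep rho.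

Lemma repM x y : rho (mul x y) = rho x * rho y.
Proof. exact: rhoSU2.1. Qed.

Lemma rep1 : rho one = 1.
Proof.
have u := SU2_unit (rhoSU2.2 one).
by apply: (mulrI u); rewrite mulr1 -repM mul1g.
Qed.

Lemma repV x : rho (inv x) = (rho x)^-1.
Proof.
have u := SU2_unit (rhoSU2.2 x).
by apply: (mulIr u); rewrite -repM mulVg rep1 mulVr.
Qed.

Lemma rep_gexpz x (n : int) : rho (gexpz x n) = rho x ^ n.
Proof.
have rep_natexp (m : nat) : rho (natexp x m) = rho x ^+ m.
  by elim: m => [|m IH]; rewrite ?expg0 ?rep1 // expgS repM IH exprS.
by case: n => m /=; rewrite ?repV rep_natexp.
Qed.

Lemma rep_commutator_subgroup l : (forall x y, rho x * rho y = rho y * rho x) ->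
  in_commutator_subgroup l -> rho l = 1.
Proof.
move=> rhoC [s ->]; elim: s => [|[x y] s IH] /=; first exact: rep1.
have u z := SU2_unit (rhoSU2.2 z).
by rewrite repM IH mulr1 /commg /conjg !repM !repV (rhoC x y) mulKr ?mulVr.
Qed.

Lemma SU2_rep_sign_twist (d : G -> int) : (forall x y, d (mul x y) = d x + d y) ->
  SU2_rep (fun x => (-1) ^ d x * rho x).
Proof.
move=> dM; split=> [x y|x]; rewrite ?mulmxE.
  rewrite dM repM exprzDr ?unitrN1 // -!mulrA; congr (_ * _).
  by rewrite !mulrA (commrXz _ (commrN1 (rho x))).
have N1N1 : -1 * -1 = 1 :> 'M[R[i]]_2 by rewrite mulrNN mulr1.
have [->|->] := exprz_involution (d x) N1N1.
  by rewrite mul1r; apply: rhoSU2.2.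
by rewrite mulN1r; apply/SU2N/rhoSU2.2.
Qed.

End SU2Representations.

Section KnotGroupRepresentations.
Variables (R : realType) (K : knot_group).
Implicit Types (theta eta : R) (p q : int) (rho : kg_group K -> 'M[R[i]]_2).

Lemma rep_surgery_slope rho theta eta p q : SU2_rep rho ->
  rho (mer K) = diag_expi theta -> rho (lon K) = diag_expi eta ->
  rho (surgery_slope K p q) = diag_expi (p%:~R * theta + q%:~R * eta).
Proof.
move=> rhoSU2 rm rl.
by rewrite repM // !rep_gexpz // rm rl !diag_expiXz diag_expiD.
Qed.

Lemma lon_abelian_rep rho eta : SU2_rep rho ->
  (forall x y, rho x * rho y = rho y * rho x) ->
  rho (lon K) = diag_expi eta -> exists k : int, eta = 2 * pi * k%:~R.
Proof.
move=> rhoSU2 rhoC rl; apply: diag_expi_eq1.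
by rewrite -rl (rep_commutator_subgroup rhoSU2 rhoC (kg_lon_comm K)).
Qed.

Lemma in_RKDpi theta eta : in_RK K theta eta -> in_RK K (theta + pi) eta.
Proof.
case=> rho [rhoSU2 [rm rl]]; have [d [dM dm]] := kg_abel K.
have dl := hom_commutator_subgroup dM (kg_lon_comm K).
exists (fun x => (-1) ^ d x * rho x); split; first exact: SU2_rep_sign_twist.
split; first by rewrite dm expr1z mulN1r rm -diag_expiDpi.
by rewrite dl expr0z mul1r.
Qed.

Lemma SU2_cyclic_surgery_RK p q theta eta : SU2_cyclic_surgery R K p q ->
  in_RK K theta eta -> (exists k : int, p%:~R * theta + q%:~R * eta = 2 * pi * k%:~R) ->
  exists k : int, eta = 2 * pi * k%:~R.
Proof.
move=> cyc [rho [rhoSU2 [rm rl]]] [k Ek].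
apply: (lon_abelian_rep rhoSU2 _ rl).
have [|g rhog x y] := cyc rho rhoSU2.
  by rewrite (rep_surgery_slope _ _ rhoSU2 rm rl) Ek diag_expi_2piz.
by have [a ->] := rhog x; have [b ->] := rhog y; apply/commrXz/commr_sym/commrXz.
Qed.

Lemma SO3_cyclic_surgery_RK p q theta eta : SO3_cyclic_surgery R K p q ->
  in_RK K theta eta -> (exists k : int, p%:~R * theta + q%:~R * eta = pi * k%:~R) ->
  exists k : int, eta = 2 * pi * k%:~R.
Proof.
move=> cyc [rho [[rhoM rhoSU2] [rm rl]]] [k Ek].
have adrho : SO3_rep (fun x => adm (rho x)).
  by split=> [x y|x]; [rewrite rhoM admM | apply: adm_SO3].
apply: (lon_abelian_rep (conj rhoM rhoSU2) _ rl).
have [|g adg x y] := cyc _ adrho.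
  by rewrite (rep_surgery_slope _ _ (conj rhoM rhoSU2) rm rl) Ek adm_diag_expi_piz.
have [a Ea] := adg x; have [b Eb] := adg y.
by rewrite -!mulmxE; apply: (SU2_commute_of_adm_cyclic (rhoSU2 x) (rhoSU2 y) Ea Eb).
Qed.

End KnotGroupRepresentations.

Theorem lemma3p2 (R : realType) (K : knot_group) (p q : int)
  (hpq : coprimez p q) (hq : q != 0) :
  (SU2_cyclic_surgery R K p q ->
     forall theta eta : R, ~ (in_RK_star K theta eta /\ in_S p q theta eta)) /\
  (SO3_cyclic_surgery R K p q ->
     forall theta eta : R, ~ (in_RK_star K theta eta /\ in_S_hat p q theta eta)).
Proof.
split=> cyc theta eta [[RK eta_n2piZ] S]; apply: eta_n2piZ.
  case: S => [|[k Ek]]; first exact: SU2_cyclic_surgery_RK cyc RK.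
  apply: (SU2_cyclic_surgery_RK cyc (in_RKDpi RK)); exists k.
  by rewrite -Ek; ring.
exact: SO3_cyclic_surgery_RK cyc RK S.
Qed.
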